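(* Let $P=\Bbbk[x_1,x_2,x_3]$ with Poisson bracket $\{x_1,x_2\}=x_2^2$, $\{x_2,x_3\}=3x_1^2$, $\{x_3,x_1\}=2x_2x_3$. Then $\mathrm{PAut}_{\mathrm{gr}}(P)=\{a\cdot\mathrm{id}: a\in\Bbbk^\times\}$, i.e. every graded Poisson automorphism acts on $P_1$ as a nonzero scalar, and $P$ has no Poisson reflections.
   Context: $\Bbbk$ is algebraically closed of characteristic $0$; $P$ has the standard grading. A graded Poisson automorphism is a degree-preserving bijective algebra homomorphism preserving the bracket. A Poisson reflection is a finite-order graded Poisson automorphism $\phi$ with $\phi|_{P_1}$ having eigenvalues $1,1,\xi$ for a primitive root of unity $\xi\neq1$. *)

From HB Require Import structures.
From mathcomp Require Import all_boot all_order all_algebra.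
From mathcomp Require Import mpoly.
Set Implicit Arguments. Unset Strict Implicit. Unset Printing Implicit Defensive.
Import Order.TTheory GRing.Theory Num.Theory.
Local Open Scope ring_scope.

(* Variables x1, x2, x3 are 'X_0, 'X_1, 'X_2 in {mpoly F[3]}. *)

Definition genbr (F : fieldType) (i j : 'I_3) : {mpoly F[3]} :=
  let x1 : {mpoly F[3]} := 'X_(@Ordinal 3 0 isT) in
  let x2 : {mpoly F[3]} := 'X_(@Ordinal 3 1 isT) in
  let x3 : {mpoly F[3]} := 'X_(@Ordinal 3 2 isT) in
  match nat_of_ord i, nat_of_ord j with
  | 0, 1 => x2 ^+ 2
  | 1, 0 => - x2 ^+ 2
  | 1, 2 => 3%:R * x1 ^+ 2
  | 2, 1 => - (3%:R * x1 ^+ 2)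
  | 2, 0 => 2%:R * x2 * x3
  | 0, 2 => - (2%:R * x2 * x3)
  | _, _ => 0
  end.

Definition pbr (F : fieldType) (f g : {mpoly F[3]}) : {mpoly F[3]} :=
  \sum_(i < 3) \sum_(j < 3) mderiv i f * mderiv j g * genbr F i j.

Definition graded_poisson_aut (F : fieldType) (phi : {mpoly F[3]} -> {mpoly F[3]}) : Prop :=
  [/\ (forall (a : F) (p q : {mpoly F[3]}), phi (a *: p + q) = a *: phi p + phi q),
      (forall p q : {mpoly F[3]}, phi (p * q) = phi p * phi q) /\ phi 1 = 1,
      bijective phi,
      (forall (d : nat) (p : {mpoly F[3]}), p \is d.-homog -> phi p \is d.-homog)
    & (forall f g : {mpoly F[3]}, phi (pbr f g) = pbr (phi f) (phi g))].

Definition matP1 (F : fieldType) (phi : {mpoly F[3]} -> {mpoly F[3]}) : 'M[F]_3 :=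
  \matrix_(i < 3, j < 3) (phi 'X_j)@_(mnm1 i).

Definition poisson_reflection (F : fieldType) (phi : {mpoly F[3]} -> {mpoly F[3]}) : Prop :=
  [/\ graded_poisson_aut phi,
      (exists2 n : nat, (0 < n)%N & forall p, iter n phi p = p)
    & exists xi : F, [/\ xi != 1, (exists m : nat, m.-primitive_root xi) &
        char_poly (matP1 phi) = ('X - 1) ^+ 2 * ('X - xi%:P)]].

From HB Require Import structures.
From mathcomp Require Import all_boot all_order all_algebra.
From mathcomp Require Import mpoly ring.
Import Order.TTheory GRing.Theory Num.Theory.
Local Open Scope ring_scope.

(* The image of each x_j is a linear form u_j, and the bracket of two linear
   forms with coefficient vectors a, b is 3 c_1 x_1^2 + 2 c_2 x_2 x_3 + c_3 x_2^2
   with c = a × b.  Comparing coefficients in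
   {u_1, u_2} = u_2^2, {u_2, u_3} = 3 u_1^2, {u_3, u_1} = 2 u_2 u_3
   first kills the x_3-components of u_1, u_2 and then, because the bracket has
   no x_1^2-term once those vanish, the x_1-component of u_2; as u_2 <> 0 by
   injectivity, the remaining equations force u_j = a x_j.  A scalar matrix
   a I has characteristic polynomial (X - a)^3, which is never
   (X - 1)^2 (X - xi) with xi <> 1. *)

Notation i0 := (@Ordinal 3 0 isT).
Notation i1 := (@Ordinal 3 1 isT).
Notation i2 := (@Ordinal 3 2 isT).

Lemma ord3_ind (P : 'I_3 -> Prop) : P i0 -> P i1 -> P i2 -> forall i, P i.
Proof.
move=> P0 P1 P2 [[|[|[|n]]] ltn3] //.
- by rewrite (_ : Ordinal ltn3 = i0) //; apply: val_inj.
- by rewrite (_ : Ordinal ltn3 = i1) //; apply: val_inj.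
- by rewrite (_ : Ordinal ltn3 = i2) //; apply: val_inj.
Qed.

Lemma big_ord3 (R : nmodType) (F : 'I_3 -> R) :
  \sum_(i < 3) F i = F i0 + F i1 + F i2.
Proof.
rewrite !big_ord_recl big_ord0 addr0 addrA.
by congr (F _ + F _ + F _); apply: val_inj.
Qed.

Section QuadraticForms.
Context {R : comNzRingType}.

Definition qform (a11 a22 a33 a12 a13 a23 x y z : R) : R :=
  a11 * x ^+ 2 + a22 * y ^+ 2 + a33 * z ^+ 2
  + a12 * (x * y) + a13 * (x * z) + a23 * (y * z).

Lemma qform_coef_eq (a11 a22 a33 a12 a13 a23 b11 b22 b33 b12 b13 b23 : R) :
  (forall x y z, qform a11 a22 a33 a12 a13 a23 x y z
                 = qform b11 b22 b33 b12 b13 b23 x y z) ->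
  (a11, a22, a33, a12, a13, a23) = (b11, b22, b33, b12, b13, b23).
Proof.
move=> E.
have e1 := E 1 0 0; have e2 := E 0 1 0; have e3 := E 0 0 1.
have e12 := E 1 1 0; have e13 := E 1 0 1; have e23 := E 0 1 1.
rewrite /qform !expr2 !(mul0r, mulr0, mul1r, mulr1, addr0, add0r)
  in e1 e2 e3 e12 e13 e23.
rewrite e1 e2 e3 in e12 e13 e23.
by rewrite e1 e2 e3 (addrI _ e12) (addrI _ e13) (addrI _ e23).
Qed.

End QuadraticForms.

Section LinearForms.
Context {k : fieldType}.

Definition linform (a1 a2 a3 : k) : {mpoly k[3]} :=
  a1 *: 'X_i0 + a2 *: 'X_i1 + a3 *: 'X_i2.

Definition pt3 (x y z : k) (i : 'I_3) : k :=
  match nat_of_ord i with 0 => x | 1 => y | _ => z end.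

Lemma mderivXU (i j : 'I_3) : mderiv i ('X_j : {mpoly k[3]}) = (j == i)%:R%:MP.
Proof.
rewrite mderivX mnm1E; case: eqP => [->|_]; last by rewrite scale0r.
have -> : (U_(i) - U_(i) = 0 :> 'X_{1..3})%MM.
  by apply/mnmP => l; rewrite mnmBE subnn mnm0E.
by rewrite scale1r mpolyX0.
Qed.

Lemma pbrXU (i j : 'I_3) : pbr ('X_i : {mpoly k[3]}) 'X_j = genbr k i j.
Proof.
rewrite /pbr (bigD1 i) //= [X in _ + X]big1 ?addr0; last first.
  move=> a; rewrite eq_sym => ia; apply: big1 => b _.
  by rewrite mderivXU (negbTE ia) mpolyC0 !mul0r.
rewrite (bigD1 j) //= [X in _ + X]big1 ?addr0; last first.
  by move=> b; rewrite eq_sym => jb; rewrite !mderivXU (negbTE jb) mpolyC0 mulr0 mul0r.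
by rewrite !mderivXU !eqxx mpolyC1 !mul1r.
Qed.

Lemma dhomog1_linform (p : {mpoly k[3]}) :
  p \is 1.-homog -> p = linform p@_U_(i0) p@_U_(i1) p@_U_(i2).
Proof.
move=> p_homog; apply/mpolyP => m; rewrite /linform !(mcoeffD, mcoeffZ, mcoeffX).
have [/mdeg1P [j /eqP ->]|m_deg] := boolP (mdeg m == 1%N).
  by elim/ord3_ind: j; rewrite !eq_mnm1 /= !(mulr1, mulr0, addr0, add0r).
have U_neq i : (U_(i)%MM == m) = false.
  by apply/negbTE; apply: contra m_deg => /eqP <-; rewrite mdeg1.
by rewrite (dhomog_nemf_coeff p_homog m_deg) !U_neq !mulr0 !addr0.
Qed.

Lemma meval_linform x y z a1 a2 a3 :
  meval (pt3 x y z) (linform a1 a2 a3) = a1 * x + a2 * y + a3 * z.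
Proof. by rewrite /linform !(mevalD, mevalZ, mevalXU). Qed.

Lemma meval_pbr_linform x y z a1 a2 a3 b1 b2 b3 :
  meval (pt3 x y z) (pbr (linform a1 a2 a3) (linform b1 b2 b3)) =
  qform (3%:R * (a2 * b3 - a3 * b2)) (a1 * b2 - a2 * b1) 0 0 0
        (2%:R * (a3 * b1 - a1 * b3)) x y z.
Proof.
rewrite /pbr !big_ord3 /linform !mderivD !mderivZ !mderivXU /genbr /=.
rewrite !(mevalD, mevalM, mevalZ, mevalC, mevalN, mevalXU, meval0) /pt3 /qform /=.
by ring.
Qed.

Lemma linform_bracket_coef {c a1 a2 a3 b1 b2 b3 d1 d2 d3 e1 e2 e3 : k} :
  pbr (linform a1 a2 a3) (linform b1 b2 b3)
    = c *: (linform d1 d2 d3 * linform e1 e2 e3) ->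
  (3%:R * (a2 * b3 - a3 * b2), a1 * b2 - a2 * b1, 0, 0, 0,
   2%:R * (a3 * b1 - a1 * b3))
  = (c * (d1 * e1), c * (d2 * e2), c * (d3 * e3), c * (d1 * e2 + d2 * e1),
     c * (d1 * e3 + d3 * e1), c * (d2 * e3 + d3 * e2)).
Proof.
move=> E; apply: qform_coef_eq => x y z.
rewrite -meval_pbr_linform E mevalZ mevalM !meval_linform /qform.
by ring.
Qed.

Lemma linform_bracket_scalar {u1 u2 u3 v1 v2 v3 w1 w2 w3 : k} :
  2%:R != 0 :> k -> 3%:R != 0 :> k -> linform v1 v2 v3 != 0 ->
  pbr (linform u1 u2 u3) (linform v1 v2 v3)
    = linform v1 v2 v3 * linform v1 v2 v3 ->
  pbr (linform v1 v2 v3) (linform w1 w2 w3)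
    = 3%:R *: (linform u1 u2 u3 * linform u1 u2 u3) ->
  pbr (linform w1 w2 w3) (linform u1 u2 u3)
    = 2%:R *: (linform v1 v2 v3 * linform w1 w2 w3) ->
  [/\ linform u1 u2 u3 = u1 *: 'X_i0, linform v1 v2 v3 = u1 *: 'X_i1,
      linform w1 w2 w3 = u1 *: 'X_i2 & u1 != 0].
Proof.
move=> n2 n3 v_neq0 E1 E2 E3.
have sq0 (a : k) : a * a = 0 -> a = 0 by move/eqP; rewrite mulf_eq0 orbb => /eqP.
case: (linform_bracket_coef (etrans E1 (esym (scale1r _)))) => xx1 yy1 zz1 _ _ _.
case: (linform_bracket_coef E2) => xx2 _ zz2 xy2 _ _.
case: (linform_bracket_coef E3) => _ yy3 _ xy3 _ _.
have {zz1} v3_0 : v3 = 0 by apply: sq0; rewrite -[LHS]mul1r -zz1.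
have {zz2} u3_0 : u3 = 0 by apply/sq0/(mulfI n3); rewrite mulr0 -zz2.
subst u3 v3.
have v1_0 : v1 = 0 by apply: sq0; rewrite -[LHS]mul1r -xx1; ring.
subst v1.
have v2_neq0 : v2 != 0.
  by apply: contraNneq v_neq0 => ->; rewrite /linform !scale0r !addr0.
have u1_v2 : u1 = v2.
  by apply: (mulIf v2_neq0); rewrite -[RHS]mul1r -yy1; ring.
subst u1.
have w3_v2 : w3 = v2.
  by apply: (mulfI v2_neq0); apply: (mulfI n3); rewrite -xx2; ring.
subst w3.
have u2_0 : u2 = 0.
  apply: (mulfI v2_neq0); apply: (mulfI n2); apply: (mulfI n3).
  by rewrite !mulr0 xy2; ring.
have w1_0 : w1 = 0.
  by apply: (mulfI v2_neq0); apply: (mulfI n2); rewrite !mulr0 xy3; ring.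
subst u2 w1.
have w2_0 : w2 = 0.
  apply: (mulfI v2_neq0); apply: (mulfI n3); rewrite !mulr0.
  transitivity (2%:R * (v2 * w2) + v2 * w2); first by ring.
  by rewrite -yy3; ring.
subst w2.
by split; rewrite // /linform !scale0r ?addr0 ?add0r.
Qed.

End LinearForms.

Section GradedPoissonAutomorphism.
Context {k : fieldType} {phi : {mpoly k[3]} -> {mpoly k[3]}}.
Hypothesis phi_gpaut : graded_poisson_aut phi.

Lemma gpaut0 : phi 0 = 0.
Proof.
case: phi_gpaut => lin _ _ _ _.
by have := lin 1 0 0; rewrite !scale1r addr0 -{1}[phi 0]addr0 => /addrI.
Qed.

Lemma gpautZ c p : phi (c *: p) = c *: phi p.
Proof. by case: phi_gpaut => lin _ _ _ _; rewrite -[c *: p]addr0 lin gpaut0 addr0. Qed.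

Lemma gpaut_natM n p : phi (n%:R * p) = n%:R *: phi p.
Proof. by rewrite -mpolyC_nat mul_mpolyC gpautZ. Qed.

Lemma gpaut_pbrXU i j : pbr (phi 'X_i) (phi 'X_j) = phi (genbr k i j).
Proof. by case: phi_gpaut => _ _ _ _ phi_pbr; rewrite -pbrXU phi_pbr. Qed.

Lemma gpautX_linform j : exists a1 a2 a3, phi 'X_j = linform a1 a2 a3.
Proof.
case: phi_gpaut => _ _ _ phi_homog _; do 3 eexists; apply: dhomog1_linform.
by apply: phi_homog; rewrite dhomogX /= mdeg1.
Qed.

Lemma gpautX_neq0 j : phi 'X_j != 0.
Proof.
case: phi_gpaut => _ _ phi_bij _ _; apply/eqP => phiX0.
have := bij_inj phi_bij (etrans phiX0 (esym gpaut0)).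
by move/(congr1 (mcoeff U_(j))); rewrite mcoeffXU eqxx mcoeff0 => /eqP; rewrite oner_eq0.
Qed.

Lemma gpaut_scalar : 2%:R != 0 :> k -> 3%:R != 0 :> k ->
  exists2 a : k, a != 0 & forall i : 'I_3, phi 'X_i = a *: 'X_i.
Proof.
move=> n2 n3; case: (phi_gpaut) => _ [phiM _] _ _ _.
have [u1 [u2 [u3 phiX0]]] := gpautX_linform i0.
have [v1 [v2 [v3 phiX1]]] := gpautX_linform i1.
have [w1 [w2 [w3 phiX2]]] := gpautX_linform i2.
have v_neq0 : linform v1 v2 v3 != 0 by rewrite -phiX1 gpautX_neq0.
have E1 : pbr (linform u1 u2 u3) (linform v1 v2 v3)
           = linform v1 v2 v3 * linform v1 v2 v3.
  by rewrite -phiX0 -phiX1 gpaut_pbrXU /genbr /= expr2 phiM.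
have E2 : pbr (linform v1 v2 v3) (linform w1 w2 w3)
           = 3%:R *: (linform u1 u2 u3 * linform u1 u2 u3).
  by rewrite -phiX0 -phiX1 -phiX2 gpaut_pbrXU /genbr /= gpaut_natM expr2 phiM.
have E3 : pbr (linform w1 w2 w3) (linform u1 u2 u3)
           = 2%:R *: (linform v1 v2 v3 * linform w1 w2 w3).
  by rewrite -phiX0 -phiX1 -phiX2 gpaut_pbrXU /genbr /= phiM gpaut_natM scalerAl.
have [uE vE wE a_neq0] := linform_bracket_scalar n2 n3 v_neq0 E1 E2 E3.
by exists u1 => // i; elim/ord3_ind: i; rewrite ?phiX0 ?phiX1 ?phiX2.
Qed.

End GradedPoissonAutomorphism.

Lemma matP1_scalar {k : fieldType} {phi : {mpoly k[3]} -> {mpoly k[3]}} {a : k} :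
  (forall i, phi 'X_i = a *: 'X_i) -> matP1 phi = a%:M.
Proof.
move=> phiX; apply/matrixP => i j; rewrite !mxE phiX mcoeffZ mcoeffXU eq_sym.
by case: eqP; rewrite ?mulr1 ?mulr0.
Qed.

Lemma char_poly_scalar (R : comNzRingType) n (a : R) :
  char_poly (a%:M : 'M_n) = ('X - a%:P) ^+ n.
Proof. by rewrite /char_poly /char_poly_mx map_scalar_mx -raddfB det_scalar. Qed.

Lemma XsubC_cube_eq {R : idomainType} {a b c : R} :
  ('X - a%:P) ^+ 3 = ('X - b%:P) ^+ 2 * ('X - c%:P) -> c = b.
Proof.
move=> E; have at_point x : (x - a) ^+ 3 = (x - b) ^+ 2 * (x - c).
  by have := congr1 (horner^~ x) E; rewrite !hornerE.
have := at_point b; rewrite subrr expr0n mul0r => /eqP.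
rewrite expf_eq0 subr_eq0 => /eqP ba.
have := at_point c; rewrite subrr mulr0 -ba => /eqP.
by rewrite expf_eq0 subr_eq0 => /eqP.
Qed.

Theorem lemma3p5p1 (k : closedFieldType) (hchar : [pchar k] =i pred0) :
  (forall phi : {mpoly k[3]} -> {mpoly k[3]}, graded_poisson_aut phi ->
     exists2 a : k, a != 0 & forall i : 'I_3, phi 'X_i = a *: 'X_i)
  /\ (forall phi : {mpoly k[3]} -> {mpoly k[3]}, ~ poisson_reflection phi).
Proof.
have n2 : 2%:R != 0 :> k by move/pcharf0P: hchar => ->.
have n3 : 3%:R != 0 :> k by move/pcharf0P: hchar => ->.
split=> [phi phi_gpaut | phi [phi_gpaut _ [xi [xi_neq1 _ charP1]]]].
  exact: gpaut_scalar phi_gpaut n2 n3.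
have [a _ phiX] := gpaut_scalar phi_gpaut n2 n3.
rewrite (matP1_scalar phiX) char_poly_scalar -polyC1 in charP1.
by rewrite (XsubC_cube_eq charP1) eqxx in xi_neq1.
Qed.
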